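(* Let $(C';\pi')$ be a condensation of the constrained clause $(C;\pi)$, and let $\prec$ be an atom ordering. Then (i) $(C;\pi)\models(C';\pi')$, i.e. every Herbrand interpretation satisfying $(C;\pi)$ satisfies $(C';\pi')$; and (ii) $(C;\pi)$ is redundant in $\{(C';\pi')\}$.
   Context: A clause $C$ is a finite multiset of literals, written $\Gamma\rightarrow\Delta$ with $\Gamma$ the atoms of negative and $\Delta$ the atoms of positive literals. A (straight dismatching) constraint $\pi=\bigwedge_{i\in I}t_i\neq s_i$ is a finite conjunction of disequations between variable-disjoint terms with $s_i$ straight (a variable or constant is straight; $f(s_1,\dots,s_n)$ is straight if the $s_j$ are pairwise distinct variables except for at most one straight argument); for a substitution $\sigma$, $\pi\sigma=\bigwedge_i t_i\sigma\neq s_i$; we regard $\pi$ as the set of its conjuncts when writing $\pi'\subseteq\pi$. A solution of $\pi$ is a grounding substitution $\delta$ such that no $t_i\delta$ is an instance of $s_i$. A constrained clause is a pair $(C;\pi)$; its ground instances $\mathrm{ground}((C;\pi))$ are the clauses $C\delta$ with $\delta$ a solution of $\pi$ grounding all variables of $C$ and of the $t_i$; $\mathrm{ground}(N)$ is the union over a set $N$. A Herbrand interpretation $I$ (a set of ground atoms) satisfies a ground clause $\Gamma\rightarrow\Delta$ if $\Delta\cap I\neq\emptyset$ or $\Gamma\not\subseteq I$, and satisfies $(C;\pi)$ if it satisfies all its ground instances. An atom ordering $\prec$ is an irreflexive, well-founded, total ordering on ground atoms, lifted to literals by representing $A$ as $\{A\}$ and $\neg A$ as $\{A,A\}$ with the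 multiset extension, and to ground clauses by the multiset extension of the literal ordering. A constrained clause $(C;\pi)$ is redundant in a set $N$ of constrained clauses if for every $D\in\mathrm{ground}((C;\pi))$ there are $D_1,\dots,D_n\in\mathrm{ground}(N)$ with each $D_i\prec D$ and $D_1,\dots,D_n\models D$. A constrained clause $(C';\pi')$ is a condensation of $(C;\pi)$ if $C'\subset C$ and there is a substitution $\sigma$ such that $\pi\sigma=\pi'$, $\pi'\subseteq\pi$, and for every literal $L\in C$ there is $L'\in C'$ with $L\sigma=L'$. *)

From Stdlib Require Import List Permutation.
Import ListNotations.
Set Implicit Arguments.

Section FOL.
Variables (F P : Type) (arF : F -> nat) (arP : P -> nat).

Inductive term : Type :=
| Var (x : nat)
| Fn (f : F) (args : list term).

Fixpoint term_vars (t : term) : list nat :=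
  match t with
  | Var x => [x]
  | Fn _ l => flat_map term_vars l
  end.

Fixpoint subst (s : nat -> term) (t : term) : term :=
  match t with
  | Var x => s x
  | Fn f l => Fn f (map (subst s) l)
  end.

Inductive wf_term : term -> Prop :=
| wf_var x : wf_term (Var x)
| wf_fn f l : length l = arF f -> Forall wf_term l -> wf_term (Fn f l).

Definition ground_term (t : term) : Prop := wf_term t /\ term_vars t = [].

Definition is_var (t : term) : Prop := exists x, t = Var x.

(* straight terms: a variable or constant is straight; f(s1,...,sn) is straight
   if the s_j are pairwise distinct variables except for at most one argument,
   which is itself straight. *)
Inductive straight : term -> Prop :=
| straight_var x : straight (Var x)
| straight_fn f l :
    NoDup (flat_map term_vars (filter (fun t => match t with Var _ => true | _ => false end) l)) ->
    length (filter (fun t => match t with Var _ => false | _ => true end) l) <= 1 ->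
    Forall (fun t => is_var t \/ straight t) l ->
    straight (Fn f l).

(* atoms and literals; a literal is (true, A) for A and (false, A) for ~A *)
Definition atom : Type := (P * list term)%type.
Definition atom_subst (s : nat -> term) (a : atom) : atom := (fst a, map (subst s) (snd a)).
Definition wf_atom (a : atom) : Prop := length (snd a) = arP (fst a) /\ Forall wf_term (snd a).
Definition ground_atom (a : atom) : Prop := length (snd a) = arP (fst a) /\ Forall ground_term (snd a).

Definition lit : Type := (bool * atom)%type.
Definition lit_subst (s : nat -> term) (L : lit) : lit := (fst L, atom_subst s (snd L)).

(* a clause is a finite multiset of literals, represented by a list
   considered up to permutation *)
Definition clause : Type := list lit.
Definition clause_subst (s : nat -> term) (C : clause) : clause := map (lit_subst s) C.
Definition wf_clause (C : clause) : Prop := Forall (fun L => wf_atom (snd L)) C.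

Definition strict_submultiset (C' C : clause) : Prop :=
  exists D, D <> [] /\ Permutation C (C' ++ D).

(* a constraint is a finite conjunction of disequations t_i != s_i,
   represented by the list of pairs (t_i, s_i) *)
Definition constraint : Type := list (term * term).

Definition constraint_subst (s : nat -> term) (pi : constraint) : constraint :=
  map (fun p => (subst s (fst p), snd p)) pi.

Definition wf_constraint (pi : constraint) : Prop :=
  Forall (fun p => wf_term (fst p) /\ wf_term (snd p) /\ straight (snd p) /\
     (forall x, In x (term_vars (fst p)) -> ~ In x (term_vars (snd p)))) pi.

Definition instance_of (t s : term) : Prop := exists tau, subst tau s = t.

Definition grounding (d : nat -> term) : Prop := forall x, ground_term (d x).

Definition solution (d : nat -> term) (pi : constraint) : Prop :=
  grounding d /\ Forall (fun p => ~ instance_of (subst d (fst p)) (snd p)) pi.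

Definition cclause : Type := (clause * constraint)%type.

Definition ground_inst (cc : cclause) (D : clause) : Prop :=
  exists d, solution d (snd cc) /\ D = clause_subst d (fst cc).

Definition ground_set (N : cclause -> Prop) (D : clause) : Prop :=
  exists cc, N cc /\ ground_inst cc D.

Definition interp : Type := atom -> Prop.

Definition sat_ground (I : interp) (D : clause) : Prop :=
  (exists A, In (true, A) D /\ I A) \/ (exists A, In (false, A) D /\ ~ I A).

Definition sat_cclause (I : interp) (cc : cclause) : Prop :=
  forall D, ground_inst cc D -> sat_ground I D.

Definition entails_ground (Ds : list clause) (D : clause) : Prop :=
  forall I : interp, Forall (sat_ground I) Ds -> sat_ground I D.

Definition atom_ordering (lt : atom -> atom -> Prop) : Prop :=
  (forall a, ground_atom a -> ~ lt a a) /\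
  (forall a b c, ground_atom a -> ground_atom b -> ground_atom c ->
     lt a b -> lt b c -> lt a c) /\
  (forall a b, ground_atom a -> ground_atom b -> a <> b -> lt a b \/ lt b a) /\
  well_founded (fun a b : {x : atom | ground_atom x} => lt (proj1_sig a) (proj1_sig b)).

End FOL.

Definition mul_ext {T : Type} (lt : T -> T -> Prop) (M N : list T) : Prop :=
  exists Z X Y, X <> [] /\ Permutation N (Z ++ X) /\ Permutation M (Z ++ Y) /\
    Forall (fun y => Exists (fun x => lt y x) X) Y.

Section Ord.
Variables (F P : Type).
(* A is represented as {A}, ~A as {A, A} *)
Definition lit_ms (L : lit F P) : list (atom F P) :=
  if fst L then [snd L] else [snd L; snd L].
Definition lit_lt (lt : atom F P -> atom F P -> Prop) (L1 L2 : lit F P) : Prop :=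
  mul_ext lt (lit_ms L1) (lit_ms L2).
Definition clause_lt (lt : atom F P -> atom F P -> Prop) (C1 C2 : clause F P) : Prop :=
  mul_ext (lit_lt lt) C1 C2.

Definition redundant (arF : F -> nat) (arP : P -> nat) (lt : atom F P -> atom F P -> Prop)
    (N : cclause F P -> Prop) (cc : cclause F P) : Prop :=
  forall D, ground_inst arF cc D ->
    exists Ds, Forall (fun Di => ground_set arF N Di /\ clause_lt lt Di D) Ds /\
               entails_ground Ds D.

Definition condensation (C' : clause F P) (pi' : constraint F) (C : clause F P) (pi : constraint F) : Prop :=
  strict_submultiset C' C /\
  exists sigma : nat -> term F,
    (forall c, In c (constraint_subst sigma pi) <-> In c pi') /\
    (forall c, In c pi' -> In c pi) /\
    (forall L, In L C -> exists L', In L' C' /\ lit_subst sigma L = L').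
End Ord.

(* Part (i): a ground instance C'δ of (C';π') is covered by the instance Cσδ of (C;π): σδ
   solves π because πσ ⊆ π', and every literal of Cσ lies in C'.  Part (ii): since π' ⊆ π,
   every ground instance Cδ of (C;π) comes with the instance C'δ of (C';π'), a proper
   sub-multiset of Cδ; it is smaller in every multiset extension and entails Cδ. *)
From Stdlib Require Import List Permutation ClassicalEpsilon.
Import ListNotations.
Set Implicit Arguments.

Section Terms.
Variables (F : Type) (arF : F -> nat).

Fixpoint term_nested_ind (Q : term F -> Prop) (HVar : forall x, Q (Var F x))
  (HFn : forall f l, Forall Q l -> Q (Fn f l)) (t : term F) : Q t :=
  match t with
  | Var _ x => HVar x
  | Fn f l => HFn f l ((fix go (l : list (term F)) : Forall Q l :=
       match l with
       | [] => Forall_nil _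
       | t :: l' => Forall_cons _ (term_nested_ind HVar HFn t) (go l')
       end) l)
  end.

Lemma subst_comp (s1 s2 : nat -> term F) (t : term F) :
  subst s2 (subst s1 t) = subst (fun x => subst s2 (s1 x)) t.
Proof.
  induction t as [x | f l IH] using term_nested_ind; simpl; auto.
  f_equal. rewrite map_map. apply map_ext_in. intros a Ha.
  rewrite Forall_forall in IH; auto.
Qed.

Lemma subst_ext_in (s1 s2 : nat -> term F) (t : term F) :
  (forall x, In x (term_vars t) -> s1 x = s2 x) -> subst s1 t = subst s2 t.
Proof.
  induction t as [x | f l IH] using term_nested_ind; simpl; intros Hs.
  - apply Hs; left; auto.
  - f_equal. apply map_ext_in. intros a Ha. rewrite Forall_forall in IH.
    apply IH; auto. intros x Hx. apply Hs, in_flat_map. eauto.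
Qed.

Lemma term_vars_subst_nil (s : nat -> term F) (t : term F) :
  (forall x, term_vars (s x) = []) -> term_vars (subst s t) = [].
Proof.
  intros Hs. induction t as [x | f l IH] using term_nested_ind; simpl; auto.
  induction IH as [|a l Ha _ IHl]; simpl; auto. rewrite Ha, IHl; auto.
Qed.

Lemma wf_subst (s : nat -> term F) (t : term F) :
  wf_term arF t -> (forall x, wf_term arF (s x)) -> wf_term arF (subst s t).
Proof.
  induction t as [x | f l IH] using term_nested_ind; intros Hw Hs; simpl; auto.
  inversion Hw as [|? ? Hlen Hargs]; subst. constructor.
  - rewrite length_map; auto.
  - apply Forall_forall. intros a Ha. apply in_map_iff in Ha as [b [<- Hb]].
    rewrite Forall_forall in IH, Hargs. auto.
Qed.

Lemma wf_subst_var (s : nat -> term F) (t : term F) x :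
  wf_term arF (subst s t) -> In x (term_vars t) -> wf_term arF (s x).
Proof.
  induction t as [y | f l IH] using term_nested_ind; simpl; intros Hw Hx.
  - destruct Hx as [<- | []]; auto.
  - inversion Hw as [|? ? _ Hargs]; subst. apply in_flat_map in Hx as [a [Ha Hxa]].
    rewrite Forall_forall in IH, Hargs. apply (IH a Ha); auto. apply Hargs, in_map; auto.
Qed.

(* [σ] need not map every variable to a well-formed term, so [σδ] is not a grounding in
   general; it is patched by [δ] wherever [σδ] fails to be ground, which changes nothing
   on terms whose [σ]-image is well formed. *)
Lemma grounding_comp_wf (sigma d : nat -> term F) :
  grounding arF d ->
  exists d', grounding arF d' /\
    forall t, wf_term arF (subst sigma t) -> subst d' t = subst d (subst sigma t).
Proof.
  intros Hd.
  exists (fun x => if excluded_middle_informative (ground_term arF (subst d (sigma x)))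
           then subst d (sigma x) else d x).
  split.
  - intros x. destruct excluded_middle_informative; auto.
  - intros t Ht. rewrite subst_comp. apply subst_ext_in. intros x Hx.
    destruct excluded_middle_informative as [_ | Hng]; auto.
    exfalso. apply Hng. split.
    + apply (wf_subst_var (fun y => subst d (sigma y)) t); auto.
      rewrite <- subst_comp. apply wf_subst; auto. intros y; apply Hd.
    + apply term_vars_subst_nil. intros y; apply Hd.
Qed.

Lemma solution_incl (d : nat -> term F) (pi pi' : constraint F) :
  incl pi' pi -> solution arF d pi -> solution arF d pi'.
Proof.
  intros Hincl [Hg Hpi]. split; auto.
  rewrite Forall_forall in *. auto.
Qed.

End Terms.

Section Clauses.
Variables (F P : Type) (arF : F -> nat) (arP : P -> nat).

Lemma sat_ground_incl (I : interp F P) (D D' : clause F P) :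
  incl D D' -> sat_ground I D -> sat_ground I D'.
Proof.
  intros Hincl [[A [HA HI]] | [A [HA HI]]]; [left | right]; exists A; auto.
Qed.

Lemma entails_ground_incl (D D' : clause F P) : incl D D' -> entails_ground [D] D'.
Proof.
  intros Hincl I HI. inversion HI; subst. eapply sat_ground_incl; eauto.
Qed.

Lemma strict_submultiset_incl (C' C : clause F P) : strict_submultiset C' C -> incl C' C.
Proof.
  intros [D [_ Hperm]] L HL.
  apply (Permutation_in _ (Permutation_sym Hperm)), in_or_app; auto.
Qed.

Lemma strict_submultiset_subst (d : nat -> term F) (C' C : clause F P) :
  strict_submultiset C' C -> strict_submultiset (clause_subst d C') (clause_subst d C).
Proof.
  intros [D [HD Hperm]]. exists (clause_subst d D). split.
  - destruct D; simpl; congruence.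
  - unfold clause_subst. rewrite <- map_app. apply Permutation_map; auto.
Qed.

Lemma clause_lt_strict_submultiset (lt : atom F P -> atom F P -> Prop) (C' C : clause F P) :
  strict_submultiset C' C -> clause_lt lt C' C.
Proof.
  intros [D [HD Hperm]]. exists C', D, []. repeat split; auto.
  rewrite app_nil_r; auto.
Qed.

Lemma lit_subst_comp_wf (sigma d d' : nat -> term F) (L : lit F P) :
  (forall t, wf_term arF (subst sigma t) -> subst d' t = subst d (subst sigma t)) ->
  wf_atom arF arP (snd (lit_subst sigma L)) ->
  lit_subst d' L = lit_subst d (lit_subst sigma L).
Proof.
  destruct L as [b [p args]]. intros Hagree [_ Hwf]. simpl in Hwf.
  unfold lit_subst, atom_subst; simpl. do 2 f_equal.
  rewrite map_map. apply map_ext_in. intros t Ht.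
  rewrite Forall_forall in Hwf. apply Hagree, Hwf, in_map; auto.
Qed.

Lemma condensation_sat_cclause (I : interp F P) (C C' : clause F P) (pi pi' : constraint F) :
  wf_clause arF arP C -> wf_constraint arF pi -> condensation C' pi' C pi ->
  sat_cclause arF I (C, pi) -> sat_cclause arF I (C', pi').
Proof.
  intros HwC Hwpi [Hsub [sigma [Hpi' [Hpi'pi HC']]]] HI D [d [[Hd Hsol] ->]]. simpl in *.
  destruct (grounding_comp_wf sigma Hd) as [d' [Hd' Hagree]].
  assert (Hsol' : solution arF d' pi).
  { split; auto. apply Forall_forall. intros [t s] Hts. simpl.
    assert (Hin : In (subst sigma t, s) pi')
      by (apply Hpi', (in_map (fun p => (subst sigma (fst p), snd p)) _ _ Hts)).
    unfold wf_constraint in Hwpi. rewrite Forall_forall in Hsol, Hwpi.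
    rewrite Hagree; [apply (Hsol _ Hin) | apply (Hwpi _ (Hpi'pi _ Hin))]. }
  assert (Hincl : incl (clause_subst d' C) (clause_subst d C')).
  { intros L' HL'. apply in_map_iff in HL' as [L [<- HL]].
    destruct (HC' L HL) as [Ls [HLs Heq]]. subst Ls.
    assert (HwLs : wf_atom arF arP (snd (lit_subst sigma L))).
    { unfold wf_clause in HwC. rewrite Forall_forall in HwC.
      apply HwC, (strict_submultiset_incl Hsub); auto. }
    rewrite (lit_subst_comp_wf _ _ Hagree HwLs). apply in_map; auto. }
  apply (sat_ground_incl Hincl), HI. exists d'. auto.
Qed.

Lemma strict_submultiset_redundant (lt : atom F P -> atom F P -> Prop)
    (C C' : clause F P) (pi pi' : constraint F) :
  strict_submultiset C' C -> incl pi' pi ->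
  redundant arF arP lt (fun cc => cc = (C', pi')) (C, pi).
Proof.
  intros Hsub Hpi D [d [Hsol ->]]. simpl in *.
  exists [clause_subst d C']. split.
  - constructor; [split | constructor].
    + exists (C', pi'). split; auto. exists d. split; auto. eapply solution_incl; eauto.
    + apply clause_lt_strict_submultiset, strict_submultiset_subst; auto.
  - apply entails_ground_incl, incl_map, strict_submultiset_incl; auto.
Qed.

End Clauses.

Theorem lemma2 (F P : Type) (arF : F -> nat) (arP : P -> nat)
    (lt : atom F P -> atom F P -> Prop)
    (C C' : clause F P) (pi pi' : constraint F) :
  atom_ordering arF arP lt ->
  wf_clause arF arP C -> wf_constraint arF pi ->
  condensation C' pi' C pi ->
  (forall I : interp F P, sat_cclause arF I (C, pi) -> sat_cclause arF I (C', pi')) /\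
  redundant arF arP lt (fun cc => cc = (C', pi')) (C, pi).
Proof.
  intros _ HwC Hwpi Hcond. split.
  - intros I. exact (condensation_sat_cclause HwC Hwpi Hcond).
  - destruct Hcond as [Hsub [_ [_ [Hpi _]]]].
    apply strict_submultiset_redundant; auto.
Qed.
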